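(* For a cartesian uniform preorder $(A,R)$ the following are equivalent: (i) $(A,R)$ is relationally complete; (ii) $\mathsf{fam}(D(A,R))$ is a tripos.
   Context: A uniform preorder is a pair $(A,R)$ with $A$ a set and $R\subseteq P(A\times A)$ such that $\mathrm{id}_A\in R$, $s\circ r\in R$ whenever $r,s\in R$, and $s\in R$ whenever $r\in R$ and $s\subseteq r$. Monotone maps $f:(A,R)\to(B,S)$ are functions with $\{(fa,fa')\mid(a,a')\in r\}\in S$ for all $r\in R$, ordered by $f\le g$ iff $\{(fa,ga)\mid a\in A\}\in S$; this is a locally ordered category $\mathsf{UOrd}$ with finite 2-products (terminal: singleton; product $(A\times B,R\otimes S)$ with $R\otimes S$ the relations contained in some $r\times s$). $(A,R)$ is cartesian if the terminal projection $(A,R)\to1$ and the diagonal $(A,R)\to(A,R)\times(A,R)$ have right adjoints $\top:1\to A$ and $\wedge:A\times A\to A$ (adjunction $f\dashv g$: $\mathrm{id}\le gf$, $fg\le\mathrm{id}$). A cartesian $(A,R)$ is relationally complete if there is a relation $@\in R$ such that for every $r\in R$ there is a total function $\tilde r:A\to A$ whose graph is in $R$ with: for all $a,b,c\in A$, $(a\wedge b,c)\in r$ implies $(\tilde r(a)\wedge b,c)\in @$. $D(A,R)=(PA,DR)$, $DR$ being the relations on the powerset $PA$ contained in some $[r]=\{(U,V)\mid\forall a\in U\,\exists b\in V.\,(a,b)\in r\}$, $r\in R$. For a uniform preorder $(B,S)$, $\mathsf{fam}(B,S)$ is the indexed preorder (pseudofunctor $\mathsf{Set}^{op}\to\mathsf{Ord}$)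 $I\mapsto(B^I,\le)$, $\varphi\le\psi$ iff $\{(\varphi i,\psi i)\mid i\in I\}\in S$, reindexing $u^*$ by precomposition. A tripos is an indexed preorder $\mathcal{P}$ such that: its fibers are Heyting preorders (finite meets and, for each $a$, a right adjoint $a\Rightarrow-$ to $-\wedge a$; finite joins not required), this structure preserved up to isomorphism by reindexing; every $u^*$ has a right adjoint $\forall_u$ satisfying the Beck–Chevalley condition ($u^*\forall_v\cong\forall_{\bar v}\bar u^*$ for every pullback of $u,v$ in $\mathsf{Set}$ with projections $\bar u,\bar v$); and $\mathcal{P}$ has a generic predicate, i.e. some $\iota\in\mathcal{P}(C)$ such that every predicate $\varphi\in\mathcal{P}(I)$ is isomorphic to $f^*\iota$ for some $f:I\to C$. *)

Definition relT (A : Type) := A -> A -> Prop.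
Definition subrel {A : Type} (s r : relT A) : Prop := forall x y, s x y -> r x y.
Definition idrel {A : Type} : relT A := fun x y => x = y.
(* comprel r s = s ∘ r *)
Definition comprel {A : Type} (r s : relT A) : relT A :=
  fun x z => exists y, r x y /\ s y z.

Definition is_upre (A : Type) (R : relT A -> Prop) : Prop :=
  R idrel /\
  (forall r s, R r -> R s -> R (comprel r s)) /\
  (forall r s, R r -> subrel s r -> R s).

Definition image_rel {A B : Type} (f : A -> B) (r : relT A) : relT B :=
  fun b b' => exists a a', r a a' /\ f a = b /\ f a' = b'.

Definition monotone {A B : Type} (R : relT A -> Prop) (S : relT B -> Prop)
  (f : A -> B) : Prop := forall r, R r -> S (image_rel f r).

Definition map_le {A B : Type} (S : relT B -> Prop) (f g : A -> B) : Prop :=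
  S (fun b b' => exists a, f a = b /\ g a = b').

Definition term_rel : relT unit -> Prop := fun _ => True.

Definition prod_rel {A B : Type} (R : relT A -> Prop) (S : relT B -> Prop)
  : relT (A * B) -> Prop :=
  fun t => exists r s, R r /\ S s /\
    subrel t (fun p q => r (fst p) (fst q) /\ s (snd p) (snd q)).

Definition adjoint {A B : Type} (R : relT A -> Prop) (S : relT B -> Prop)
  (f : A -> B) (g : B -> A) : Prop :=
  monotone R S f /\ monotone S R g /\
  map_le R (fun a => a) (fun a => g (f a)) /\
  map_le S (fun b => f (g b)) (fun b => b).

Definition is_cartesian {A : Type} (R : relT A -> Prop)
  (top : unit -> A) (meet : A * A -> A) : Prop :=
  adjoint R term_rel (fun _ => tt) top /\
  adjoint R (prod_rel R R) (fun a => (a, a)) meet.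

Definition rel_complete {A : Type} (R : relT A -> Prop) (meet : A * A -> A) : Prop :=
  exists at_ : relT A, R at_ /\
    forall r, R r -> exists rt : A -> A,
      R (fun a b => b = rt a) /\
      forall a b c, r (meet (a, b)) c -> at_ (meet (rt a, b)) c.

Definition lift_rel {A : Type} (r : relT A) : relT (A -> Prop) :=
  fun U V => forall a, U a -> exists b, V b /\ r a b.

Definition DR {A : Type} (R : relT A -> Prop) : relT (A -> Prop) -> Prop :=
  fun t => exists r, R r /\ subrel t (lift_rel r).

Definition fam_P (B : Type) : Type -> Type := fun I => I -> B.
Definition fam_le {B : Type} (S : relT B -> Prop) :
  forall I : Type, fam_P B I -> fam_P B I -> Prop :=
  fun I phi psi => S (fun b b' => exists i, phi i = b /\ psi i = b').
Definition fam_re (B : Type) :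
  forall I J : Type, (J -> I) -> fam_P B I -> fam_P B J :=
  fun I J u phi => fun j => phi (u j).

Section Tripos.
Variable P : Type -> Type.
Variable le : forall I : Type, P I -> P I -> Prop.
Variable re : forall I J : Type, (J -> I) -> P I -> P J.

Definition piso (I : Type) (x y : P I) : Prop := le I x y /\ le I y x.

(* pseudofunctor Set^op -> Ord *)
Definition is_indexed_preorder : Prop :=
  (forall I x, le I x x) /\
  (forall I x y z, le I x y -> le I y z -> le I x z) /\
  (forall I J (u : J -> I) x y, le I x y -> le J (re I J u x) (re I J u y)) /\
  (forall I x, piso I (re I I (fun i => i) x) x) /\
  (forall I J K (u : J -> I) (v : K -> J) x,
      piso K (re I K (fun k => u (v k)) x) (re J K v (re I J u x))).

Definition is_top (I : Type) (t : P I) : Prop := forall x, le I x t.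
Definition is_meet (I : Type) (x y m : P I) : Prop :=
  le I m x /\ le I m y /\ forall z, le I z x -> le I z y -> le I z m.
Definition is_imp (I : Type) (a b c : P I) : Prop :=
  forall x m, is_meet I x a m -> (le I m b <-> le I x c).

Definition heyting_fibres : Prop :=
  forall I : Type,
    (exists t, is_top I t) /\
    (forall x y, exists m, is_meet I x y m) /\
    (forall a b, exists c, is_imp I a b c).

Definition reindex_preserves_heyting : Prop :=
  forall I J (u : J -> I),
    (forall t, is_top I t -> is_top J (re I J u t)) /\
    (forall x y m, is_meet I x y m ->
       is_meet J (re I J u x) (re I J u y) (re I J u m)) /\
    (forall a b c, is_imp I a b c ->
       is_imp J (re I J u a) (re I J u b) (re I J u c)).

Definition is_right_adjoint_re (I J : Type) (u : J -> I) (all : P J -> P I) : Prop :=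
  forall x y, le J (re I J u x) y <-> le I x (all y).

Definition is_pullback {I J K L : Type} (u : J -> I) (v : K -> I)
  (p1 : L -> J) (p2 : L -> K) : Prop :=
  (forall l, u (p1 l) = v (p2 l)) /\
  (forall j k, u j = v k -> exists l, (p1 l = j /\ p2 l = k) /\
       forall l', p1 l' = j /\ p2 l' = k -> l' = l).

Definition has_universal : Prop :=
  (forall I J (u : J -> I), exists all, is_right_adjoint_re I J u all) /\
  (forall I J K L (u : J -> I) (v : K -> I) (p1 : L -> J) (p2 : L -> K)
          (all_v : P K -> P I) (all_p1 : P L -> P J),
     is_pullback u v p1 p2 ->
     is_right_adjoint_re I K v all_v ->
     is_right_adjoint_re J L p1 all_p1 ->
     forall y : P K, piso J (re I J u (all_v y)) (all_p1 (re K L p2 y))).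

Definition has_generic : Prop :=
  exists (C : Type) (iota : P C),
    forall (I : Type) (phi : P I), exists f : I -> C, piso I phi (re C I f iota).

Definition is_tripos : Prop :=
  is_indexed_preorder /\ heyting_fibres /\ reindex_preserves_heyting /\
  has_universal /\ has_generic.
End Tripos.

(* In fam(D(A,R)) a predicate over I is a family of subsets of A, and
   phi <= psi holds when a single r in R sends every element of every phi i
   to some element of psi i.  Meets are computed pointwise with the meet of A.
   Relational completeness is precisely what turns a realizer of
   (phi /\ a) <= b into a realizer of phi <= (a => b), where (a => b) i
   consists of the c whose application @ (c /\ -) sends a i into b i; the
   universal quantifier along u is the same construction with c /\ c.
   These choices commute strictly with reindexing, and the identity family
   on the powerset of A is generic.

   Conversely, over the instances (h, b, c) of arbitrary relations h, let Y
   be the implication from {b | h b c} to {c} and Phi its universal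
   quantification over (b, c); since h ranges over all relations, neither
   depends on a particular r.  Composing the counits of => and of forall
   gives @.  For r in R and h_a := (b, c |-> r (a /\ b, c)), the predicate
   {a | h = h_a} lies below Phi; a realizer of this inequality sends each a
   into Phi h_a, which yields r~, and the counits turn r (a /\ b, c) into
   @ (r~ a /\ b, c). *)

From Stdlib Require Import ClassicalEpsilon.

Section StableStructure.

Variables (P : Type -> Type) (le : forall I : Type, P I -> P I -> Prop)
  (re : forall I J : Type, (J -> I) -> P I -> P J).
Hypothesis le_reflexive : forall I x, le I x x.
Hypothesis le_transitive : forall I x y z, le I x y -> le I y z -> le I x z.
Hypothesis re_monotone :
  forall I J (u : J -> I) x y, le I x y -> le J (re I J u x) (re I J u y).

Lemma is_meet_unique I x y m m' :
  is_meet P le I x y m -> is_meet P le I x y m' -> le I m m'.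
Proof. intros (Hmx & Hmy & _) (_ & _ & Hm'). exact (Hm' m Hmx Hmy). Qed.

Lemma is_meet_piso I x y m m' :
  is_meet P le I x y m -> piso P le I m m' -> is_meet P le I x y m'.
Proof.
  intros (Hmx & Hmy & Hm) [Hmm' Hm'm]. split; [|split].
  - exact (le_transitive _ _ _ _ Hm'm Hmx).
  - exact (le_transitive _ _ _ _ Hm'm Hmy).
  - intros z Hzx Hzy. exact (le_transitive _ _ _ _ (Hm z Hzx Hzy) Hmm').
Qed.

Lemma is_imp_piso I a b c c' :
  is_imp P le I a b c -> piso P le I c c' -> is_imp P le I a b c'.
Proof.
  intros Hc [Hcc' Hc'c] x m Hm. rewrite (Hc x m Hm). split; intro Hx.
  - exact (le_transitive _ _ _ _ Hx Hcc').
  - exact (le_transitive _ _ _ _ Hx Hc'c).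
Qed.

Lemma right_adjoint_unique I J (u : J -> I) all all' :
  is_right_adjoint_re P le re I J u all ->
  is_right_adjoint_re P le re I J u all' ->
  forall y, le I (all y) (all' y).
Proof. intros Hall Hall' y. apply Hall', Hall, le_reflexive. Qed.

Variable mt : forall I, P I -> P I -> P I.
Hypothesis mt_is_meet : forall I x y, is_meet P le I x y (mt I x y).

Lemma is_imp_of_meet_adj I a b c :
  (forall x, le I (mt I x a) b <-> le I x c) -> is_imp P le I a b c.
Proof.
  intros Hadj x m Hm. rewrite <- Hadj.
  pose proof (is_meet_unique _ _ _ _ _ Hm (mt_is_meet I x a)) as Hm_mt.
  pose proof (is_meet_unique _ _ _ _ _ (mt_is_meet I x a) Hm) as Hmt_m.
  split; intro Hb.
  - exact (le_transitive _ _ _ _ Hmt_m Hb).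
  - exact (le_transitive _ _ _ _ Hm_mt Hb).
Qed.

Lemma is_imp_unique I a b c c' :
  is_imp P le I a b c -> is_imp P le I a b c' -> le I c c'.
Proof.
  intros Hc Hc'.
  apply (Hc' c (mt I c a) (mt_is_meet I c a)), (Hc c _ (mt_is_meet I c a)).
  apply le_reflexive.
Qed.

Variables (tp : forall I, P I) (im : forall I, P I -> P I -> P I).
Hypothesis tp_is_top : forall I, is_top P le I (tp I).
Hypothesis im_is_imp : forall I a b, is_imp P le I a b (im I a b).

Lemma heyting_fibres_of_canonical : heyting_fibres P le.
Proof.
  intros I. split; [|split].
  - exists (tp I). apply tp_is_top.
  - intros x y. exists (mt I x y). apply mt_is_meet.
  - intros a b. exists (im I a b). apply im_is_imp.
Qed.

Hypothesis tp_stable : forall I J (u : J -> I), piso P le J (re I J u (tp I)) (tp J).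
Hypothesis mt_stable : forall I J (u : J -> I) x y,
  piso P le J (re I J u (mt I x y)) (mt J (re I J u x) (re I J u y)).
Hypothesis im_stable : forall I J (u : J -> I) a b,
  piso P le J (re I J u (im I a b)) (im J (re I J u a) (re I J u b)).

Lemma reindex_preserves_heyting_of_stable : reindex_preserves_heyting P le re.
Proof.
  intros I J u. split; [|split].
  - intros t Ht x.
    apply le_transitive with (tp J); [apply tp_is_top|].
    apply le_transitive with (re I J u (tp I)); [apply tp_stable|].
    apply re_monotone, Ht.
  - intros x y m Hm. destruct (mt_stable I J u x y) as [Hre_mt Hmt_re].
    apply is_meet_piso with (mt J (re I J u x) (re I J u y)); [apply mt_is_meet|split].
    + apply le_transitive with (re I J u (mt I x y)); [exact Hmt_re|].
      apply re_monotone. exact (is_meet_unique _ _ _ _ _ (mt_is_meet I x y) Hm).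
    + apply le_transitive with (re I J u (mt I x y)); [|exact Hre_mt].
      apply re_monotone. exact (is_meet_unique _ _ _ _ _ Hm (mt_is_meet I x y)).
  - intros a b c Hc. destruct (im_stable I J u a b) as [Hre_im Him_re].
    apply is_imp_piso with (im J (re I J u a) (re I J u b)); [apply im_is_imp|split].
    + apply le_transitive with (re I J u (im I a b)); [exact Him_re|].
      apply re_monotone. exact (is_imp_unique _ _ _ _ _ (im_is_imp I a b) Hc).
    + apply le_transitive with (re I J u (im I a b)); [|exact Hre_im].
      apply re_monotone. exact (is_imp_unique _ _ _ _ _ Hc (im_is_imp I a b)).
Qed.

Variable all : forall I J, (J -> I) -> P J -> P I.
Hypothesis all_right_adjoint :
  forall I J (u : J -> I), is_right_adjoint_re P le re I J u (all I J u).
Hypothesis all_beck_chevalley :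
  forall I J K L (u : J -> I) (v : K -> I) (p1 : L -> J) (p2 : L -> K),
    is_pullback u v p1 p2 ->
    forall y, piso P le J (re I J u (all I K v y)) (all J L p1 (re K L p2 y)).

Lemma has_universal_of_canonical : has_universal P le re.
Proof.
  split.
  - intros I J u. exists (all I J u). apply all_right_adjoint.
  - intros I J K L u v p1 p2 all_v all_p1 Hpb Hv Hp1 y.
    destruct (all_beck_chevalley I J K L u v p1 p2 Hpb y) as [Hbc Hbc'].
    split.
    + apply le_transitive with (re I J u (all I K v y)).
      { apply re_monotone. exact (right_adjoint_unique _ _ _ _ _ Hv (all_right_adjoint I K v) y). }
      apply le_transitive with (all J L p1 (re K L p2 y)); [exact Hbc|].
      exact (right_adjoint_unique _ _ _ _ _ (all_right_adjoint J L p1) Hp1 _).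
    + apply le_transitive with (all J L p1 (re K L p2 y)).
      { exact (right_adjoint_unique _ _ _ _ _ Hp1 (all_right_adjoint J L p1) _). }
      apply le_transitive with (re I J u (all I K v y)); [exact Hbc'|].
      apply re_monotone. exact (right_adjoint_unique _ _ _ _ _ (all_right_adjoint I K v) Hv y).
Qed.

End StableStructure.

Definition meet_rel {A : Type} (meet : A * A -> A) (r s : relT A) : relT A :=
  fun x y => exists a b a' b', r a a' /\ s b b' /\ x = meet (a, b) /\ y = meet (a', b').

Section FamD.

Variables (A : Type) (R : relT A -> Prop).
Hypothesis R_id : R idrel.
Hypothesis R_comp : forall r s, R r -> R s -> R (comprel r s).
Hypothesis R_down : forall r s, R r -> subrel s r -> R s.

Local Notation PA := (fam_P (A -> Prop)).
Local Notation leD := (fam_le (DR R)).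
Local Notation reD := (fam_re (A -> Prop)).

Lemma famD_le_iff I (phi psi : I -> A -> Prop) :
  leD I phi psi <-> exists r, R r /\ forall i a, phi i a -> exists b, psi i b /\ r a b.
Proof.
  split.
  - intros (r & Hr & Hsub). exists r. split; [exact Hr|].
    intros i. exact (Hsub (phi i) (psi i) (ex_intro _ i (conj eq_refl eq_refl))).
  - intros (r & Hr & H). exists r. split; [exact Hr|].
    intros U V (i & <- & <-). exact (H i).
Qed.

Lemma famD_le_incl I (phi psi : I -> A -> Prop) :
  (forall i a, phi i a -> psi i a) -> leD I phi psi.
Proof.
  intros H. apply famD_le_iff. exists idrel. split; [exact R_id|].
  intros i a Ha. exists a. split; [exact (H i a Ha) | reflexivity].
Qed.

Lemma famD_le_refl I (phi : I -> A -> Prop) : leD I phi phi.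
Proof. apply famD_le_incl. auto. Qed.

Lemma famD_le_trans I (phi psi chi : I -> A -> Prop) :
  leD I phi psi -> leD I psi chi -> leD I phi chi.
Proof.
  intros (r & Hr & Hphi)%famD_le_iff (s & Hs & Hpsi)%famD_le_iff.
  apply famD_le_iff. exists (comprel r s). split; [exact (R_comp r s Hr Hs)|].
  intros i a Ha. destruct (Hphi i a Ha) as (b & Hb & Hab).
  destruct (Hpsi i b Hb) as (c & Hc & Hbc).
  exists c. split; [exact Hc | exists b; auto].
Qed.

Lemma famD_le_reindex I J (u : J -> I) (phi psi : I -> A -> Prop) :
  leD I phi psi -> leD J (reD I J u phi) (reD I J u psi).
Proof.
  intros (r & Hr & H)%famD_le_iff. apply famD_le_iff. exists r. split; [exact Hr|].
  intros j. exact (H (u j)).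
Qed.

Lemma famD_is_indexed_preorder : is_indexed_preorder PA leD reD.
Proof.
  split; [|split; [|split; [|split]]].
  - exact famD_le_refl.
  - exact famD_le_trans.
  - exact famD_le_reindex.
  - intros I phi. split; apply famD_le_refl.
  - intros I J K u v phi. split; apply famD_le_refl.
Qed.

Definition famD_top {I : Type} : I -> A -> Prop := fun _ _ => True.

Lemma famD_top_is_top I : is_top PA leD I famD_top.
Proof. intros phi. apply famD_le_incl. constructor. Qed.

Section Cartesian.

Variable meet : A * A -> A.
Hypothesis meet_adj : adjoint R (prod_rel R R) (fun a => (a, a)) meet.

Lemma R_meet_rel r s : R r -> R s -> R (meet_rel meet r s).
Proof.
  destruct meet_adj as (_ & meet_mono & _). intros Hr Hs.
  apply R_down with (image_rel meet (fun p q => r (fst p) (fst q) /\ s (snd p) (snd q))).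
  - apply meet_mono. exists r, s. split; [exact Hr|]. split; [exact Hs|].
    intros p q H. exact H.
  - intros x y (a & b & a' & b' & Ha & Hb & -> & ->). exists (a, b), (a', b'). auto.
Qed.

Lemma R_diag_meet : R (fun a b => b = meet (a, a)).
Proof.
  destruct meet_adj as (_ & _ & Hunit & _).
  apply R_down with (1 := Hunit). intros a b ->. exists a. auto.
Qed.

Lemma R_meet_fst : R (fun x y => exists b, x = meet (y, b)).
Proof.
  destruct meet_adj as (_ & _ & _ & r & s & Hr & _ & Hcounit).
  apply R_down with r; [exact Hr|]. intros x y (b & ->).
  apply (Hcounit (meet (y, b), meet (y, b)) (y, b)). exists (y, b). auto.
Qed.

Lemma R_meet_snd : R (fun x y => exists a, x = meet (a, y)).
Proof.
  destruct meet_adj as (_ & _ & _ & r & s & _ & Hs & Hcounit).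
  apply R_down with s; [exact Hs|]. intros x y (a & ->).
  apply (Hcounit (meet (a, y), meet (a, y)) (a, y)). exists (a, y). auto.
Qed.

Definition famD_meet {I : Type} (phi psi : I -> A -> Prop) : I -> A -> Prop :=
  fun i c => exists a b, phi i a /\ psi i b /\ c = meet (a, b).

Lemma famD_meet_is_meet I (phi psi : I -> A -> Prop) :
  is_meet PA leD I phi psi (famD_meet phi psi).
Proof.
  split; [|split].
  - apply famD_le_iff. exists (fun x y => exists b, x = meet (y, b)).
    split; [exact R_meet_fst|]. intros i c (a & b & Ha & _ & ->). eauto.
  - apply famD_le_iff. exists (fun x y => exists a, x = meet (a, y)).
    split; [exact R_meet_snd|]. intros i c (a & b & _ & Hb & ->). eauto.
  - intros chi (r & Hr & Hphi)%famD_le_iff (s & Hs & Hpsi)%famD_le_iff.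
    apply famD_le_iff.
    exists (comprel (fun a b => b = meet (a, a)) (meet_rel meet r s)).
    split; [exact (R_comp _ _ R_diag_meet (R_meet_rel r s Hr Hs))|].
    intros i c Hc. destruct (Hphi i c Hc) as (a & Ha & Hca).
    destruct (Hpsi i c Hc) as (b & Hb & Hcb).
    exists (meet (a, b)). split; [exists a, b; auto|].
    exists (meet (c, c)). split; [reflexivity | exists c, c, a, b; auto].
Qed.

Section RelationallyComplete.

Variable app : relT A.
Hypothesis R_app : R app.
Hypothesis app_complete : forall r, R r -> exists rt : A -> A,
  R (fun a b => b = rt a) /\
  forall a b c, r (meet (a, b)) c -> app (meet (rt a, b)) c.

Definition famD_imp {I : Type} (phi psi : I -> A -> Prop) : I -> A -> Prop :=
  fun i c => forall a, phi i a -> exists b, psi i b /\ app (meet (c, a)) b.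

Definition famD_all {I J : Type} (u : J -> I) (psi : J -> A -> Prop) : I -> A -> Prop :=
  fun i c => forall j, u j = i -> exists b, psi j b /\ app (meet (c, c)) b.

Lemma famD_meet_imp_adj I (phi chi psi : I -> A -> Prop) :
  leD I (famD_meet phi chi) psi <-> leD I phi (famD_imp chi psi).
Proof.
  split.
  - intros (r & Hr & H)%famD_le_iff.
    destruct (app_complete r Hr) as (rt & Hrt & Hrt_app).
    apply famD_le_iff. exists (fun a b => b = rt a). split; [exact Hrt|].
    intros i c Hc. exists (rt c). split; [|reflexivity].
    intros a Ha. destruct (H i (meet (c, a))) as (b & Hb & Hrb); [exists c, a; auto|].
    exists b. auto.
  - intros (s & Hs & H)%famD_le_iff. apply famD_le_iff.
    exists (comprel (meet_rel meet s idrel) app).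
    split; [exact (R_comp _ _ (R_meet_rel s idrel Hs R_id) R_app)|].
    intros i x (c & a & Hc & Ha & ->). destruct (H i c Hc) as (d & Hd & Hcd).
    destruct (Hd a Ha) as (b & Hb & Happ).
    exists b. split; [exact Hb|]. exists (meet (d, a)). split; [|exact Happ].
    exists c, a, d, a. repeat split; assumption.
Qed.

Lemma famD_imp_is_imp I (phi psi : I -> A -> Prop) :
  is_imp PA leD I phi psi (famD_imp phi psi).
Proof.
  apply (is_imp_of_meet_adj PA leD famD_le_trans (@famD_meet) famD_meet_is_meet).
  intros chi. apply famD_meet_imp_adj.
Qed.

Lemma famD_all_right_adjoint I J (u : J -> I) :
  is_right_adjoint_re PA leD reD I J u (famD_all u).
Proof.
  intros phi psi. split.
  - intros (r & Hr & H)%famD_le_iff.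
    destruct (app_complete (comprel (fun x y => exists b, x = meet (y, b)) r)
                (R_comp _ _ R_meet_fst Hr)) as (rt & Hrt & Hrt_app).
    apply famD_le_iff. exists (fun a b => b = rt a). split; [exact Hrt|].
    intros i a Ha. exists (rt a). split; [|reflexivity].
    intros j <-. destruct (H j a Ha) as (b & Hb & Hab).
    exists b. split; [exact Hb|]. apply Hrt_app. exists a. split; [exists (rt a)|]; auto.
  - intros (s & Hs & H)%famD_le_iff. apply famD_le_iff.
    exists (comprel s (comprel (fun a b => b = meet (a, a)) app)).
    split; [exact (R_comp _ _ Hs (R_comp _ _ R_diag_meet R_app))|].
    intros j a Ha. destruct (H (u j) a Ha) as (c & Hc & Hac).
    destruct (Hc j eq_refl) as (b & Hb & Hcb).
    exists b. split; [exact Hb|]. exists c. split; [exact Hac|]. exists (meet (c, c)). auto.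
Qed.

Lemma famD_all_beck_chevalley I J K L (u : J -> I) (v : K -> I) (p1 : L -> J)
  (p2 : L -> K) :
  is_pullback u v p1 p2 ->
  forall psi, piso PA leD J (reD I J u (famD_all v psi)) (famD_all p1 (reD K L p2 psi)).
Proof.
  intros (Hcomm & Hpair) psi. split; apply famD_le_incl; unfold fam_re, famD_all.
  - intros j c Hc l Hl. apply Hc. rewrite <- Hcomm, Hl. reflexivity.
  - intros j c Hc k Hk. destruct (Hpair j k (eq_sym Hk)) as (l & (<- & <-) & _).
    apply Hc. reflexivity.
Qed.

Lemma tripos_of_rel_complete : is_tripos PA leD reD.
Proof.
  split; [exact famD_is_indexed_preorder|].
  split; [exact (heyting_fibres_of_canonical PA leD (@famD_meet) famD_meet_is_meet
                   (@famD_top) (@famD_imp) famD_top_is_top famD_imp_is_imp)|].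
  split; [exact (reindex_preserves_heyting_of_stable PA leD reD famD_le_refl
                   famD_le_trans famD_le_reindex (@famD_meet) famD_meet_is_meet
                   (@famD_top) (@famD_imp) famD_top_is_top famD_imp_is_imp
                   (fun I J u => conj (famD_le_refl J _) (famD_le_refl J _))
                   (fun I J u x y => conj (famD_le_refl J _) (famD_le_refl J _))
                   (fun I J u x y => conj (famD_le_refl J _) (famD_le_refl J _)))|].
  split; [exact (has_universal_of_canonical PA leD reD famD_le_refl famD_le_trans
                   famD_le_reindex (@famD_all) famD_all_right_adjoint
                   famD_all_beck_chevalley)|].
  exists (A -> Prop), (fun U => U). intros I phi. exists phi. split; apply famD_le_refl.
Qed.

End RelationallyComplete.

Lemma famD_imp_counit I (phi psi chi : I -> A -> Prop) :
  is_imp PA leD I phi psi chi ->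
  exists app, R app /\
    forall i x a, chi i x -> phi i a -> exists b, psi i b /\ app (meet (x, a)) b.
Proof.
  intros Hchi.
  assert (Happ : leD I (famD_meet chi phi) psi).
  { apply (Hchi chi _ (famD_meet_is_meet _ chi phi)). apply famD_le_refl. }
  apply famD_le_iff in Happ as (app & R_app & Happ).
  exists app. split; [exact R_app|]. intros i x a Hx Ha. apply Happ. exists x, a. auto.
Qed.

Lemma famD_right_adjoint_counit I J (u : J -> I) all (psi : J -> A -> Prop) :
  is_right_adjoint_re PA leD reD I J u all ->
  exists t, R t /\ forall j z, all psi (u j) z -> exists x, psi j x /\ t z x.
Proof.
  intros Hall. apply famD_le_iff, Hall, famD_le_refl.
Qed.

Lemma R_graph_choice (rho : A -> A -> Prop) s :
  R s -> (forall a, exists z, rho a z /\ s a z) ->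
  exists f : A -> A, R (fun a b => b = f a) /\ forall a, rho a (f a).
Proof.
  intros Hs Hrho.
  exists (fun a => proj1_sig (constructive_indefinite_description _ (Hrho a))).
  split.
  - apply R_down with s; [exact Hs|]. intros a b ->.
    exact (proj2 (proj2_sig (constructive_indefinite_description _ (Hrho a)))).
  - intros a. exact (proj1 (proj2_sig (constructive_indefinite_description _ (Hrho a)))).
Qed.

Definition rel_instance : Type := (relT A * A * A)%type.
Definition instance_rel (l : rel_instance) : relT A := fst (fst l).
Definition instance_premise (l : rel_instance) : A -> Prop :=
  let '(h, b, c) := l in fun w => w = b /\ h b c.
Definition instance_concl (l : rel_instance) : A -> Prop :=
  let '(_, _, c) := l in fun w => w = c.

Lemma rel_complete_of_tripos : is_tripos PA leD reD -> rel_complete R meet.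
Proof.
  intros (_ & fibres & _ & (all_exists & _) & _).
  destruct (fibres rel_instance) as (_ & _ & imp_exists).
  destruct (imp_exists instance_premise instance_concl) as (Y & HY).
  destruct (famD_imp_counit _ _ _ _ HY) as (app & R_app & app_spec).
  destruct (all_exists _ _ instance_rel) as (all & Hall).
  destruct (famD_right_adjoint_counit _ _ _ _ Y Hall) as (t & R_t & t_spec).
  exists (comprel (meet_rel meet t idrel) app).
  split; [exact (R_comp _ _ (R_meet_rel t idrel R_t R_id) R_app)|].
  intros r Hr.
  set (section_of := fun a b c => r (meet (a, b)) c : Prop).
  assert (Hsection : leD _ (reD _ _ instance_rel (fun h z => h = section_of z)) Y).
  { apply (HY _ _ (famD_meet_is_meet _ _ _)), famD_le_iff. exists r. split; [exact Hr|].
    intros ((h, b), c) w (z & b' & Hz & (-> & Hh) & ->). exists c. split; [reflexivity|].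
    unfold fam_re, instance_rel in Hz. simpl in Hz. subst h. exact Hh. }
  apply Hall, famD_le_iff in Hsection as (s & Hs & Hsection).
  destruct (R_graph_choice _ s Hs (fun a => Hsection (section_of a) a eq_refl))
    as (rt & Hrt & rt_all).
  exists rt. split; [exact Hrt|]. intros a b c Habc.
  destruct (t_spec (section_of a, b, c) (rt a) (rt_all a)) as (x & Hx & Htx).
  destruct (app_spec (section_of a, b, c) x b Hx (conj eq_refl Habc)) as (w & Hw & Happ).
  simpl in Hw. subst w.
  exists (meet (x, b)). split; [exists (rt a), b, x, b; repeat split; assumption | exact Happ].
Qed.

End Cartesian.

End FamD.

Theorem theorem6p5 (A : Type) (R : relT A -> Prop)
  (top : unit -> A) (meet : A * A -> A) :
  is_upre A R ->
  is_cartesian R top meet ->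
  (rel_complete R meet <->
   is_tripos (fam_P (A -> Prop)) (fam_le (DR R)) (fam_re (A -> Prop))).
Proof.
  intros (R_id & R_comp & R_down) (_ & meet_adj). split.
  - intros (app & R_app & app_complete).
    exact (tripos_of_rel_complete A R R_id R_comp R_down meet meet_adj app R_app
             app_complete).
  - exact (rel_complete_of_tripos A R R_id R_comp R_down meet meet_adj).
Qed.
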